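(* Suppose $V \models \mathsf{ZF}^- + \mathsf{DC}_\mu$-Scheme, where $\mu$ is an infinite cardinal. Then for any proper class $\mathcal{C}$ definable (with parameters) over $V$, there is a subset $b \subseteq \mathcal{C}$ of cardinality $\mu$.
   Context: $\mathsf{ZF}^-$ denotes $\mathsf{ZF}$ without Power Set, with the Collection Scheme (plus Empty Set, Extensionality, Pairing, Union, Infinity, Foundation, Separation and Replacement Schemes). For an infinite cardinal $\mu$, the $\mathsf{DC}_\mu$-Scheme is the scheme: for all formulas $\varphi,\psi$ and sets $u,w$, if there is $y$ with $\psi(y,u)$ and for every $\alpha < \mu$ and every sequence $s = \langle x_\beta : \beta < \alpha\rangle$ with $\psi(x_\beta,u)$ for all $\beta$ there is $z$ with $\psi(z,u)$ and $\varphi(s,z,w)$, then there is a function $f$ with domain $\mu$ such that for each $\alpha < \mu$, $\psi(f(\alpha),u)$ and $\varphi(f\restriction\alpha, f(\alpha), w)$. *)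

(* First-order language of set theory {∈}, Tarskian
   satisfaction in a structure (M, E), and the axioms of ZF^- (with
   Collection) and the DC_mu scheme, stated as meta-level properties of the
   structure (single axioms semantically, schemes by quantifying over
   formulas). *)

Inductive form : Type :=
| FMem : nat -> nat -> form
| FEq  : nat -> nat -> form
| FBot : form
| FImp : form -> form -> form
| FAnd : form -> form -> form
| FOr  : form -> form -> form
| FAll : form -> form                (* binds de Bruijn variable 0 *)
| FEx  : form -> form.

Definition scons {M : Type} (x : M) (env : nat -> M) : nat -> M :=
  fun n => match n with 0 => x | S k => env k end.

Fixpoint sat {M : Type} (E : M -> M -> Prop) (env : nat -> M) (f : form) : Prop :=
  match f with
  | FMem i j => E (env i) (env j)
  | FEq i j => env i = env j
  | FBot => False
  | FImp a b => sat E env a -> sat E env b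
  | FAnd a b => sat E env a /\ sat E env b
  | FOr a b => sat E env a \/ sat E env b
  | FAll a => forall x, sat E (scons x env) a
  | FEx a => exists x, sat E (scons x env) a
  end.

Section SetNotions.
Variables (M : Type) (E : M -> M -> Prop).

Definition ax_ext := forall a b, (forall z, E z a <-> E z b) -> a = b.
Definition ax_empty := exists e, forall z, ~ E z e.
Definition ax_pair := forall a b, exists c, forall z, E z c <-> (z = a \/ z = b).
Definition ax_union := forall a, exists u, forall z, E z u <-> exists y, E y a /\ E z y.
Definition ax_infinity := exists x,
  (exists e, E e x /\ forall z, ~ E z e) /\
  (forall y, E y x -> exists s, E s x /\ forall z, E z s <-> (E z y \/ z = y)).
Definition ax_foundation := forall x, (exists y, E y x) ->
  exists y, E y x /\ ~ exists z, E z y /\ E z x.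
Definition sch_separation := forall (phi : form) (env : nat -> M) a,
  exists b, forall z, E z b <-> (E z a /\ sat E (scons z env) phi).
Definition sch_replacement := forall (phi : form) (env : nat -> M) a,
  (forall x, E x a -> exists! y, sat E (scons y (scons x env)) phi) ->
  exists b, forall x, E x a -> exists y, E y b /\ sat E (scons y (scons x env)) phi.
Definition sch_collection := forall (phi : form) (env : nat -> M) a,
  (forall x, E x a -> exists y, sat E (scons y (scons x env)) phi) ->
  exists b, forall x, E x a -> exists y, E y b /\ sat E (scons y (scons x env)) phi.

Definition ZFminus : Prop :=
  ax_ext /\ ax_empty /\ ax_pair /\ ax_union /\ ax_infinity /\ ax_foundation /\
  sch_separation /\ sch_replacement /\ sch_collection.

Definition is_upair (u a b : M) := forall z, E z u <-> (z = a \/ z = b).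
(* Kuratowski pair p = {{a},{a,b}} *)
Definition is_opair (p a b : M) :=
  exists u v, is_upair u a a /\ is_upair v a b /\ is_upair p u v.
Definition is_function (f : M) :=
  (forall p, E p f -> exists a b, is_opair p a b) /\
  (forall p p' a b b', E p f -> E p' f -> is_opair p a b -> is_opair p' a b' -> b = b').
Definition app (f a b : M) := exists p, E p f /\ is_opair p a b.
Definition has_dom (f d : M) := forall a, E a d <-> exists b, app f a b.
Definition is_restriction (f d s : M) :=
  forall p, E p s <-> (E p f /\ exists a b, is_opair p a b /\ E a d).
Definition is_bijection (f a b : M) :=
  is_function f /\ has_dom f a /\
  (forall x y, app f x y -> E y b) /\
  (forall y, E y b -> exists x, app f x y) /\
  (forall x x' y, app f x y -> app f x' y -> x = x').

Definition transitive (x : M) := forall y z, E z y -> E y x -> E z x.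
Definition is_ordinal (x : M) :=
  transitive x /\ (forall y, E y x -> transitive y) /\
  (forall y z, E y x -> E z x -> E y z \/ y = z \/ E z y).
Definition is_empty (x : M) := forall z, ~ E z x.
Definition is_succ_of (s y : M) := forall z, E z s <-> (E z y \/ z = y).
Definition is_limit (x : M) :=
  is_ordinal x /\ ~ is_empty x /\ forall y, E y x -> exists s, E s x /\ is_succ_of s y.
Definition is_omega (w : M) := is_limit w /\ forall y, E y w -> ~ is_limit y.

Definition is_cardinal (mu : M) :=
  is_ordinal mu /\ forall alpha f, E alpha mu -> ~ is_bijection f alpha mu.
Definition is_infinite_cardinal (mu : M) :=
  is_cardinal mu /\ exists w, is_omega w /\ (E w mu \/ w = mu).

Definition has_card (b mu : M) := exists f, is_bijection f mu b.

(* DC_mu scheme: psi has free variable 0 (= y), phi has free variables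
   0 (= s) and 1 (= z); remaining variables are parameters from env. *)
Definition DC_scheme (mu : M) : Prop :=
  forall (phi psi : form) (env : nat -> M),
    (exists y, sat E (scons y env) psi) ->
    (forall alpha s, E alpha mu -> is_function s -> has_dom s alpha ->
       (forall beta x, app s beta x -> sat E (scons x env) psi) ->
       exists z, sat E (scons z env) psi /\ sat E (scons s (scons z env)) phi) ->
    exists f, is_function f /\ has_dom f mu /\
      forall alpha, E alpha mu ->
        exists x s, app f alpha x /\ is_restriction f alpha s /\
          sat E (scons x env) psi /\ sat E (scons s (scons x env)) phi.

Definition proper_class (theta : form) (env : nat -> M) : Prop :=
  ~ exists c, forall y, E y c <-> sat E (scons y env) theta.

End SetNotions.

From Stdlib Require Import Classical.
Set Implicit Arguments.

(* Write z ∈ ⋃⋃s for "z is a member of a member of a member of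
   s"; if s is a function, every argument and every value of s lies in ⋃⋃s.
   Since the class C = {z | theta(z)} is proper, it is not contained in any
   set, in particular not in ⋃⋃s (Union + Separation): every set s is
   "escaped" by some element of C.  Applying the DC_mu scheme with
   psi := theta and phi(s, z) := "z ∉ ⋃⋃s" yields f with domain mu such that
   f(alpha) ∈ C and f(alpha) ∉ ⋃⋃(f|alpha) for every alpha < mu.  Then f is
   injective: if beta < alpha had f(beta) = f(alpha), this value would lie in
   ⋃⋃(f|alpha).  Finally the range b of f exists by Separation from ⋃⋃f, and
   f is a bijection from mu onto b ⊆ C. *)

(* "x_w = {x_c, x_d}", evaluated under one extra quantifier. *)
Definition upairF (w c d : nat) : form :=
  FAll (FAnd (FImp (FMem 0 (S w)) (FOr (FEq 0 (S c)) (FEq 0 (S d))))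
             (FImp (FOr (FEq 0 (S c)) (FEq 0 (S d))) (FMem 0 (S w)))).

(* With x_0 = y and x_1 = f: "y is a value of f", i.e. some Kuratowski pair
   (a, y) belongs to f. *)
Definition appF : form :=
  FEx (FEx (FAnd (FMem 0 3)
    (FEx (FEx (FAnd (upairF 1 3 3) (FAnd (upairF 0 3 4) (upairF 2 1 0))))))).

(* With x_0 = s and x_1 = z: "z ∉ ⋃⋃s". *)
Definition notInUnion2F : form :=
  FImp (FEx (FAnd (FMem 0 1) (FEx (FAnd (FMem 0 1) (FMem 3 0))))) FBot.

Section Development.
Variables (M : Type) (E : M -> M -> Prop).

Definition in_union2 (s z : M) : Prop :=
  exists p, E p s /\ exists u, E u p /\ E z u.

Lemma upairF_sat (env : nat -> M) (w c d : nat) :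
  sat E env (upairF w c d) <-> is_upair M E (env w) (env c) (env d).
Proof.
  unfold upairF, is_upair; simpl; split; intros H z; specialize (H z); tauto.
Qed.

Lemma appF_sat (env : nat -> M) (y f : M) :
  sat E (scons y (scons f env)) appF <-> exists a, app M E f a y.
Proof.
  unfold appF, app, is_opair; cbn -[upairF]; setoid_rewrite upairF_sat; cbn.
  split; intros (a & p & Hp); exists a, p; exact Hp.
Qed.

Lemma notInUnion2F_sat (env : nat -> M) (s z : M) :
  sat E (scons s (scons z env)) notInUnion2F <-> ~ in_union2 s z.
Proof. unfold in_union2; simpl; tauto. Qed.

Lemma union2_exists :
  ax_union M E -> forall s, exists U, forall z, E z U <-> in_union2 s z.
Proof.
  intros Hunion s.
  destruct (Hunion s) as [U1 HU1]; destruct (Hunion U1) as [U2 HU2].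
  exists U2; intro z; rewrite HU2; unfold in_union2; split.
  - intros (u & Hu & Hzu); apply HU1 in Hu as (p & Hp & Hup); eauto.
  - intros (p & Hp & u & Hup & Hzu); exists u; split; [apply HU1; eauto | exact Hzu].
Qed.

Lemma proper_class_not_subset :
  sch_separation M E -> forall theta env, proper_class M E theta env ->
  forall a, exists z, sat E (scons z env) theta /\ ~ E z a.
Proof.
  intros Hsep theta env Hprop a.
  apply NNPP; intro Hsub; apply Hprop.
  destruct (Hsep theta env a) as [c Hc]; exists c; intro y; rewrite Hc.
  split; [tauto |]; intro Hy; split; [| exact Hy].
  apply NNPP; intro Hya; apply Hsub; eauto.
Qed.

Lemma app_value_in_union2 (f a y : M) : app M E f a y -> in_union2 f y.
Proof.
  intros (p & Hp & u & v & _ & Hv & Hpv).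
  exists p; split; [exact Hp |]; exists v; split; [apply Hpv | apply Hv]; auto.
Qed.

Lemma restriction_value_in_union2 (f d s a y : M) :
  is_restriction M E f d s -> E a d -> app M E f a y -> in_union2 s y.
Proof.
  intros Hs Ha Hay; apply app_value_in_union2 with a.
  destruct Hay as (p & Hp & Hop); exists p; split; [apply Hs; split; eauto | exact Hop].
Qed.

Lemma app_functional (f a y y' : M) :
  is_function M E f -> app M E f a y -> app M E f a y' -> y = y'.
Proof.
  intros [_ Hfun] (p & Hp & Hop) (p' & Hp' & Hop'); exact (Hfun p p' a y y' Hp Hp' Hop Hop').
Qed.

(* The range of a function is a set: separate it from ⋃⋃f. *)
Lemma range_exists :
  ax_union M E -> sch_separation M E ->
  forall f, exists b, forall y, E y b <-> exists a, app M E f a y.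
Proof.
  intros Hunion Hsep f.
  destruct (union2_exists Hunion f) as [U HU].
  destruct (Hsep appF (scons f (fun _ => f)) U) as [b Hb].
  exists b; intro y; rewrite Hb, appF_sat.
  split; [tauto |]; intros [a Hay]; split; [apply HU, app_value_in_union2 with a |]; eauto.
Qed.

(* A sequence along the ordinal mu whose every value avoids the double union
   of all earlier values is injective; only trichotomy of mu is used. *)
Lemma avoiding_sequence_injective (mu f : M) :
  (forall x y, E x mu -> E y mu -> E x y \/ x = y \/ E y x) ->
  has_dom M E f mu ->
  (forall alpha, E alpha mu -> exists x s,
     app M E f alpha x /\ is_restriction M E f alpha s /\ ~ in_union2 s x) ->
  is_function M E f ->
  forall x x' y, app M E f x y -> app M E f x' y -> x = x'.
Proof.
  intros Htri Hdom Havoid Hf.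
  assert (Hearlier : forall beta alpha y, E beta alpha -> E alpha mu ->
            app M E f beta y -> ~ app M E f alpha y).
  { intros beta alpha y Hba Ha Hby Hay.
    destruct (Havoid alpha Ha) as (x & s & Hax & Hs & Hx).
    rewrite (app_functional Hf Hax Hay) in Hx.
    exact (Hx (restriction_value_in_union2 Hs Hba Hby)). }
  intros x x' y Hxy Hx'y.
  assert (Hx : E x mu) by (apply Hdom; eauto).
  assert (Hx' : E x' mu) by (apply Hdom; eauto).
  destruct (Htri x x' Hx Hx') as [Hlt | [Heq | Hgt]]; [| exact Heq |].
  - exfalso; exact (Hearlier x x' y Hlt Hx' Hxy Hx'y).
  - exfalso; exact (Hearlier x' x y Hgt Hx Hx'y Hxy).
Qed.

Lemma dc_avoiding_sequence (mu : M) (theta : form) (env : nat -> M) :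
  DC_scheme M E mu ->
  (forall s, exists z, sat E (scons z env) theta /\ ~ in_union2 s z) ->
  exists f, is_function M E f /\ has_dom M E f mu /\
    forall alpha, E alpha mu -> exists x s,
      app M E f alpha x /\ is_restriction M E f alpha s /\
      sat E (scons x env) theta /\ ~ in_union2 s x.
Proof.
  intros HDC Hescape.
  destruct (HDC notInUnion2F theta env) as (f & Hf & Hdom & Hval).
  - destruct (Hescape mu) as (z & Hz & _); eauto.
  - intros alpha s _ _ _ _; destruct (Hescape s) as (z & Hz & Hn).
    exists z; rewrite notInUnion2F_sat; auto.
  - exists f; split; [exact Hf | split; [exact Hdom |]].
    intros alpha Ha; destruct (Hval alpha Ha) as (x & s & Hx & Hs & Hth & Hphi).
    rewrite notInUnion2F_sat in Hphi; exists x, s; auto.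
Qed.

End Development.

Theorem theorem6p4 (M : Type) (E : M -> M -> Prop) (mu : M) :
  ZFminus M E ->
  is_infinite_cardinal M E mu ->
  DC_scheme M E mu ->
  forall (theta : form) (env : nat -> M),
    proper_class M E theta env ->
    exists b, (forall y, E y b -> sat E (scons y env) theta) /\ has_card M E b mu.
Proof.
  intros (_ & _ & _ & Hunion & _ & _ & Hsep & _ & _)
         [[[_ [_ Htri]] _] _] HDC theta env Hprop.
  assert (Hescape : forall s, exists z, sat E (scons z env) theta /\ ~ in_union2 E s z).
  { intro s; destruct (union2_exists Hunion s) as [U HU].
    destruct (proper_class_not_subset Hsep Hprop U) as (z & Hz & HzU).
    exists z; rewrite <- HU; auto. }
  destruct (dc_avoiding_sequence theta env HDC Hescape) as (f & Hf & Hdom & Hval).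
  destruct (range_exists Hunion Hsep f) as [b Hb].
  exists b; split.
  - intros y Hy; apply Hb in Hy as [a Hay].
    assert (Ha : E a mu) by (apply Hdom; eauto).
    destruct (Hval a Ha) as (x & s & Hax & _ & Hx & _).
    rewrite (app_functional Hf Hay Hax); exact Hx.
  - exists f; split; [exact Hf |]; split; [exact Hdom |]; split; [| split].
    + intros x y Hxy; apply Hb; eauto.
    + intros y Hy; apply Hb; exact Hy.
    + apply (avoiding_sequence_injective Htri Hdom); auto.
      intros alpha Ha; destruct (Hval alpha Ha) as (x & s & ? & ? & _ & ?); eauto.
Qed.
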